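(* Let $n\ge 4$ and $S=S_{1,n}$. If $P$ is a pants decomposition of $S$ whose adjacency graph $\mathcal{G}(P)$ contains no triangle (no $3$-cycle), then $P$ is either a linear pants decomposition or a cyclic pants decomposition.
   Context: $S_{1,n}$ is the connected orientable surface of genus $1$ with $n$ punctures. A pants decomposition is a maximal collection of pairwise disjoint, pairwise non-isotopic essential simple closed curves; its pairs of pants are the closures of the components of $S-P$. Two curves of $P$ are adjacent with respect to $P$ if some component of $S-P$ contains both in its closure; the adjacency graph $\mathcal{G}(P)$ has a vertex for each curve of $P$ and an edge for each adjacent pair. A pants decomposition of $S_{1,n}$ is linear if its pairs of pants consist of one torus with one boundary component, $n-2$ once-punctured annuli, and one twice-punctured disk, glued in a chain: the torus with one boundary at one end, the twice-punctured disk at the other, and the once-punctured annuli in between (so the adjacency graph is a path, with exactly one nonseparating curve at one end). It is cyclic if its pairs of pants are $n$ once-punctured annuli glued end to end in a cycle (so all its curves are nonseparating and the adjacency graph is an $n$-cycle). *)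

From mathcomp Require Import all_boot.
Set Implicit Arguments. Unset Strict Implicit. Unset Printing Implicit Defensive.

(* A pants decomposition of S_{1,n}, described (up to homeomorphism) by its
   gluing data: a finite type [C] of curves, a finite type [Pn] of pairs of
   pants, and for each pair of pants its three boundary slots, each of which is
   either a curve of P ([inl c]) or one of the n punctures ([inr k]).
   - every curve bounds exactly two slots (it is glued from two sides; both
     slots may belong to the same pair of pants),
   - every puncture is exactly one slot,
   - the surface is connected (the dual graph of pants is connected),
   - Euler characteristic: chi(S_{1,n}) = -n = -#|Pn| (genus 1). *)
Record pants_decomposition (n : nat) (C Pn : finType) := PantsDecomposition {
  bd : Pn -> 3.-tuple (C + 'I_n)%type ;
  curve_two_sides : forall c : C,
    #|[set x : Pn * 'I_3 | tnth (bd x.1) x.2 == inl c]| = 2 ;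
  puncture_once : forall k : 'I_n,
    #|[set x : Pn * 'I_3 | tnth (bd x.1) x.2 == inr k]| = 1 ;
  surface_connected : forall p q : Pn,
    connect (fun p1 p2 : Pn => [exists c : C, (inl c \in bd p1) && (inl c \in bd p2)]) p q ;
  euler_char : #|Pn| = n
}.

Section Defs.
Variables (n : nat) (C Pn : finType) (P : pants_decomposition n C Pn).

Definition on_pants (p : Pn) (c : C) : bool := inl c \in bd P p.

Definition adjacent (c d : C) : bool := (c != d) && [exists p, on_pants p c && on_pants p d].

Definition triangle_free : Prop :=
  forall c d e : C, ~ [/\ adjacent c d, adjacent d e & adjacent e c].

Definition slots (p : Pn) : seq (C + 'I_n)%type := bd P p.

(* linear: curves c_0..c_{n-1}, pants p_0..p_{n-1} (both enumerations bijective)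
   with p_0 the one-holed torus cut along c_0 with boundary c_1,
   p_i (1 <= i <= n-2) a once-punctured annulus between c_i and c_{i+1},
   p_{n-1} a twice-punctured disk bounded by c_{n-1}. *)
Definition linear : Prop :=
  exists (f : nat -> C) (g : nat -> Pn),
    [/\ forall c, exists2 i, i < n & f i = c,
        forall i j, i < n -> j < n -> f i = f j -> i = j,
        forall p, exists2 i, i < n & g i = p &
        forall i j, i < n -> j < n -> g i = g j -> i = j] /\
    [/\ perm_eq (slots (g 0)) [:: inl (f 0); inl (f 0); inl (f 1)],
        forall i, 1 <= i -> i <= n - 2 ->
          exists k, perm_eq (slots (g i)) [:: inl (f i); inl (f i.+1); inr k]
      & exists k k', perm_eq (slots (g (n - 1))) [:: inl (f (n - 1)); inr k; inr k']].

(* cyclic: n once-punctured annuli p_i between c_i and c_{i+1 mod n}. *)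
Definition cyclic : Prop :=
  exists (f : nat -> C) (g : nat -> Pn),
    [/\ forall c, exists2 i, i < n & f i = c,
        forall i j, i < n -> j < n -> f i = f j -> i = j,
        forall p, exists2 i, i < n & g i = p,
        forall i j, i < n -> j < n -> g i = g j -> i = j
      & forall i, i < n ->
          exists k, perm_eq (slots (g i)) [:: inl (f i); inl (f (i.+1 %% n)); inr k]].

End Defs.

From mathcomp Require Import all_boot zify.
Set Implicit Arguments. Unset Strict Implicit. Unset Printing Implicit Defensive.

(* Dually, the pairs of pants are the vertices and the curves the edges of a
   connected graph with n vertices and n edges, a curve bounding the same pair
   of pants twice being a loop.  Connectivity and the absence of triangles leave
   three kinds of pairs of pants: one-holed tori (a loop and one edge),
   once-punctured annuli (two edges) and twice-punctured disks (one edge).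
   Walk through the pants, always leaving by the curve one did not come in by.
   Started at a torus, the walk never returns, since its loop cannot be
   re-entered, so it stops at a torus or a disk; the chain it traces is closed
   under gluing, hence is the whole surface, and as the curve slots add up to
   2n the far end cannot be a torus.  Without tori, the same count makes every
   pair of pants an annulus, and the walk closes up into a cycle through all. *)

Section NatIndexedFamilies.
Variables (T : finType) (h : nat -> T).

Definition injective_below j :=
  forall i1 i2, i1 < j -> i2 < j -> h i1 = h i2 -> i1 = i2.

Definition onto_below j := forall t, exists2 i, i < j & h i = t.

Lemma injective_below_leq_card j : injective_below j -> j <= #|T|.
Proof.
move=> hinj; have inj' : injective (fun i : 'I_j => h i).
  by move=> x y /(hinj _ _ (ltn_ord x) (ltn_ord y)) /val_inj.
by have := leq_card _ inj'; rewrite card_ord.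
Qed.

Lemma onto_below_codom j : onto_below j -> codom (fun i : 'I_j => h i) =i T.
Proof.
by move=> honto t; have [i hij <-] := honto t; rewrite inE (codom_f _ (Ordinal hij)).
Qed.

Lemma onto_below_card_leq j : onto_below j -> #|T| <= j.
Proof.
move=> /onto_below_codom/eq_card <-.
by apply: leq_trans (card_size _) _; rewrite size_codom card_ord.
Qed.

Lemma onto_below_injective j : onto_below j -> #|T| = j -> injective_below j.
Proof.
move=> honto hcard i1 i2 lt1 lt2 e.
have /image_injP hinj : #|codom (fun i : 'I_j => h i)| == #|'I_j|.
  by rewrite card_ord (eq_card (onto_below_codom honto)) hcard.
by have [] := hinj (Ordinal lt1) (Ordinal lt2) isT isT e.
Qed.

Lemma injective_belowS j :
  injective_below j -> (forall i, i < j -> h i != h j) -> injective_below j.+1.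
Proof.
move=> hinj hnew i1 i2.
rewrite ltnS leq_eqVlt => /predU1P[->|lt1]; rewrite ltnS leq_eqVlt => /predU1P[->|lt2] // e.
- by have := hnew i2 lt2; rewrite e eqxx.
- by have := hnew i1 lt1; rewrite e eqxx.
- exact: hinj.
Qed.

Lemma first_repeat :
  exists j, [/\ j <= #|T|, exists2 i, i < j & h i = h j & injective_below j].
Proof.
pose rep j := [exists i : 'I_j, h i == h j].
have repI i j : i < j -> h i = h j -> rep j.
  by move=> ij e; apply/existsP; exists (Ordinal ij); rewrite /= e.
have [y y_le rep_y] : exists2 y, y <= #|T| & rep y.
  have /injectivePn[x [y xy e]] : ~~ injectiveb (fun i : 'I_#|T|.+1 => h i).
    by apply/injectiveP => /(leq_card _); rewrite card_ord ltnn.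
  case: (ltngtP x y) => [lt|gt|/val_inj exy]; last by rewrite exy eqxx in xy.
    by exists y; [rewrite -ltnS | exact: repI lt e].
  by exists x; [rewrite -ltnS | exact: repI gt (esym e)].
have ex_rep : exists j, rep j by exists y.
case: (ex_minnP ex_rep) => j /existsP[i /eqP hij] jmin; exists j; split.
- exact: leq_trans (jmin y rep_y) y_le.
- by exists i.
move=> i1 i2 lt1 lt2 e; case: (ltngtP i1 i2) => [lt|lt|//].
  by have := jmin _ (repI _ _ lt e); lia.
by have := jmin _ (repI _ _ lt (esym e)); lia.
Qed.

End NatIndexedFamilies.

(** * Counting the boundary slots *)

Definition is_inl (A B : Type) (v : A + B) : bool := if v is inl _ then true else false.

Lemma sum_count_inl (A : finType) (B : eqType) (s : seq (A + B)) :
  \sum_a count_mem (inl a) s = count (@is_inl A B) s.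
Proof.
elim: s => [|v s IH] /=; first by rewrite big1.
rewrite big_split /= IH; congr (_ + _); case: v => [a|b] /=; last by rewrite big1.
by rewrite (bigD1 a) //= eqxx big1 // => x xa; case: eqP => // -[ax]; rewrite ax eqxx in xa.
Qed.

Lemma sum_eq_const (I : finType) (F : I -> nat) k :
  \sum_i F i = #|I| * k -> (forall i, k <= F i) \/ (forall i, F i <= k) ->
  forall i, F i = k.
Proof.
move=> hsum [hge|hle] i.
- have : \sum_i (F i - k) == 0 by rewrite sumnB // hsum sum_nat_const subnn.
  by rewrite sum_nat_eq0 => /forallP/(_ i); have := hge i; lia.
- have : \sum_i (k - F i) == 0 by rewrite sumnB // hsum sum_nat_const subnn.
  by rewrite sum_nat_eq0 => /forallP/(_ i); have := hle i; lia.
Qed.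

Lemma eq_inl (A B : eqType) (a a' : A) : (inl a == inl a' :> A + B) = (a == a').
Proof. by []. Qed.

Lemma eq_inl_inr (A B : eqType) (a : A) (b : B) : (inl a == inr b) = false.
Proof. by []. Qed.

Lemma perm_inl_inr (A B : eqType) (s : seq (A + B)) :
  exists cs ks, perm_eq s (map inl cs ++ map inr ks).
Proof.
elim: s => [|[a|b] s [cs [ks IH]]]; first by exists [::], [::].
  by exists (a :: cs), ks; rewrite /= perm_cons.
exists cs, (b :: ks); rewrite perm_sym /= -cat1s perm_catCA /= perm_cons perm_sym.
exact: IH.
Qed.

Section PantsDecomposition.
Variables (n : nat) (C Pn : finType) (P : pants_decomposition n C Pn).

Local Notation on := (on_pants P).

Definition mult (p : Pn) (c : C) : nat := count_mem (inl c) (slots P p).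

Definition deg (p : Pn) : nat := count (@is_inl C 'I_n) (slots P p).

Lemma card_slot_set v :
  #|[set x : Pn * 'I_3 | tnth (bd P x.1) x.2 == v]| = \sum_p count_mem v (slots P p).
Proof.
rewrite -sum1dep_card -(pair_big_dep predT (fun p i => tnth (bd P p) i == v) (fun _ _ => 1)).
by apply: eq_bigr => p _; rewrite /slots -sum1_count big_tuple.
Qed.

Lemma sum_mult c : \sum_p mult p c = 2.
Proof. by rewrite -card_slot_set curve_two_sides. Qed.

Lemma card_curves : #|C| = n.
Proof.
(* Sort the 3n slots by what fills them: a curve fills two, a puncture one. *)
have : #|{: Pn * 'I_3}| = \sum_(v : C + 'I_n) \sum_p count_mem v (slots P p).
  rewrite -sum1_card (partition_big (fun x => tnth (bd P x.1) x.2) predT) //=.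
  by apply: eq_bigr => v _; rewrite -card_slot_set -sum1dep_card.
rewrite big_sumType /=; under eq_bigr do rewrite sum_mult.
under [X in _ + X]eq_bigr do rewrite -card_slot_set puncture_once.
rewrite card_prod card_ord (euler_char P) !sum_nat_const card_ord.
have -> : #|(fun _ : C => true)| = #|C| by [].
lia.
Qed.

Lemma sum_deg : \sum_p deg p = #|Pn| * 2.
Proof.
rewrite /deg; under eq_bigr do rewrite -sum_count_inl.
rewrite exchange_big; under eq_bigr do rewrite sum_mult.
by rewrite sum_nat_const card_curves (euler_char P).
Qed.

Lemma on_multE p c : on p c = (0 < mult p c).
Proof. by rewrite /on_pants -has_pred1 has_count. Qed.

Lemma deg_ge2 p c d : c != d -> on p c -> on p d -> 1 < deg p.
Proof.
rewrite /deg -sum_count_inl !on_multE => cd hc hd.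
rewrite (bigD1 c) // (bigD1 d) 1?eq_sym //=.
exact: leq_add hc (leq_trans hd (leq_addr _ _)).
Qed.

Lemma mult_le2 p c : mult p c <= 2.
Proof. by rewrite -(sum_mult c) (bigD1 p) //= leq_addr. Qed.

Lemma mult_pair p q c : p != q -> mult p c + mult q c <= 2.
Proof.
move=> pq; rewrite -(sum_mult c) (bigD1 p) //= leq_add2l (bigD1 q) 1?eq_sym //=.
exact: leq_addr.
Qed.

Lemma mult2_unique p q c : mult p c = 2 -> on q c -> q = p.
Proof.
move=> h2; rewrite on_multE => hq; apply/eqP; apply: contraTT hq => qp.
by have := mult_pair c qp; rewrite h2 -ltnNge; lia.
Qed.

Lemma mult1_other p c : mult p c = 1 -> exists2 q, q != p & on q c.
Proof.
move=> h1; case: (pickP [pred q | (q != p) && on q c]) => [q /andP[]|none]; first by exists q.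
have := sum_mult c; rewrite (bigD1 p) //= h1 big1 // => q qp.
by move: (none q) => /=; rewrite qp on_multE /=; case: (mult q c).
Qed.

Lemma curve_sides p q r c : p != q -> on p c -> on q c -> on r c -> r = p \/ r = q.
Proof.
rewrite !on_multE => pq hp hq hr.
case: (eqVneq r p) => [|rp]; first by left.
case: (eqVneq r q) => [|rq]; first by right.
have := sum_mult c; rewrite (bigD1 p) // (bigD1 q) 1?eq_sym // (bigD1 r) /= ?rp ?rq //.
lia.
Qed.

Lemma curve_on_some c : exists p, on p c.
Proof.
case: (pickP [pred q | on q c]) => [q h|none]; first by exists q.
have := sum_mult c; rewrite big1 // => q _.
by move: (none q) => /=; rewrite on_multE; case: (mult q c).
Qed.

Lemma mult_perm p c L : perm_eq (slots P p) L -> mult p c = count_mem (inl c) L.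
Proof. by rewrite /mult => /permP ->. Qed.

Lemma on_perm p c L : perm_eq (slots P p) L -> on p c = (inl c \in L).
Proof. by move/perm_mem => h; rewrite /on_pants -h. Qed.

Lemma gluing_closed_full (S : pred Pn) p0 :
  S p0 -> (forall p q c, S p -> on p c -> on q c -> S q) -> forall q, S q.
Proof.
move=> Sp0 closedS q; have /connectP[s] := surface_connected P p0 q.
elim: s p0 Sp0 => [|p s IH] p0 Sp0 /=; first by move=> _ ->.
by case/andP => /existsP[c /andP[h0 h]] ?; apply: IH => //; exact: closedS h0 h.
Qed.

(** * Shapes of pairs of pants *)

Definition torus_pants p c d : bool :=
  (c != d) && perm_eq (slots P p) [:: inl c; inl c; inl d].
Definition annulus_pants p c d k : bool :=
  (c != d) && perm_eq (slots P p) [:: inl c; inl d; inr k].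
Definition disk_pants p c k k' : bool :=
  perm_eq (slots P p) [:: inl c; inr k; inr k'].

(* A walk entering [p] through [c] leaves it through [d], and [d] leads to a
   different pair of pants. *)
Definition passage p c d : bool :=
  [&& d != c, mult p d == 1 & [forall e, on p e ==> (e == c) || (e == d)]].

Lemma passageP p c d :
  reflect [/\ d != c, mult p d = 1 & forall e, on p e -> e = c \/ e = d] (passage p c d).
Proof.
apply: (iffP and3P) => [[dc /eqP m1 /forallP only]|[dc m1 only]]; split => //.
- by move=> e /(implyP (only e)) /orP[] /eqP; [left | right].
- exact/eqP.
- by apply/forallP => e; apply/implyP => /only[] ->; rewrite eqxx ?orbT.
Qed.

Lemma torus_passage p c d : torus_pants p c d -> passage p c d.
Proof.
case/andP => cd hp; apply/passageP; split; first by rewrite eq_sym.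
  by rewrite (mult_perm _ hp) /= !eq_inl eqxx (negbTE cd).
by move=> e; rewrite (on_perm _ hp) !inE !eq_inl orbA orbb => /orP[] /eqP; [left | right].
Qed.

Lemma torus_loop p a b : torus_pants p a b -> mult p a = 2.
Proof. by case/andP => ab hp; rewrite (mult_perm _ hp) /= !eq_inl eqxx eq_sym (negbTE ab). Qed.

Lemma annulus_curves p a b k e : annulus_pants p a b k -> on p e -> e = a \/ e = b.
Proof.
case/andP => _ hp; rewrite (on_perm _ hp) !inE !eq_inl eq_inl_inr orbF.
by case/orP => /eqP; [left | right].
Qed.

Lemma annulus_sym p a b k : annulus_pants p a b k -> annulus_pants p b a k.
Proof.
case/andP => ab hp; rewrite /annulus_pants eq_sym ab (perm_trans hp) //.
by apply/permP => q /=; lia.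
Qed.

Lemma annulus_passage p a b k : annulus_pants p a b k -> passage p a b.
Proof.
move=> hab; case/andP: (hab) => ab hp; apply/passageP; split.
- by rewrite eq_sym.
- by rewrite (mult_perm _ hp) /= !eq_inl eqxx (negbTE ab).
- by move=> e; apply: annulus_curves hab.
Qed.

Lemma annulus_passage_on p a b k c :
  annulus_pants p a b k -> on p c -> exists d, passage p c d.
Proof.
move=> hab /(annulus_curves hab)[->|->]; first by exists b; exact: annulus_passage hab.
by exists a; exact: annulus_passage (annulus_sym hab).
Qed.

Lemma disk_curve p a k k' e : disk_pants p a k k' -> on p e -> e = a.
Proof. by move=> hp; rewrite (on_perm _ hp) !inE !eq_inl !eq_inl_inr !orbF => /eqP. Qed.

(** * Walking through the decomposition *)

Section Walk.
Variable start : Pn * C.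

(* The defaults of the picks are junk: they are only reached once the walk has
   stopped passing through pants. *)
Definition other_curve p c := odflt c [pick d | (d != c) && on p d].
Definition other_pants p d := odflt p [pick q | (q != p) && on q d].
Definition walk_step (s : Pn * C) :=
  let d := other_curve s.1 s.2 in (other_pants s.1 d, d).

Definition walk_pants i := (iter i walk_step start).1.
Definition walk_curve i := (iter i walk_step start).2.
Local Notation g := walk_pants.
Local Notation f := walk_curve.

Definition walk_passes i := passage (g i) (f i) (f i.+1).

Lemma walk_curve_next i d : passage (g i) (f i) d -> f i.+1 = d.
Proof.
case/passageP => dc m1 only.
have -> : f i.+1 = other_curve (g i) (f i) by [].
rewrite /other_curve; case: pickP => [e /andP[ec he]|none] /=.
  by case: (only e he) ec => // ->; rewrite eqxx.
by have := none d; rewrite /= dc on_multE m1.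
Qed.

Lemma walk_passesI i d : passage (g i) (f i) d -> walk_passes i.
Proof. by move=> h; rewrite /walk_passes (walk_curve_next h). Qed.

Lemma walk_pants_next i : walk_passes i -> g i.+1 != g i /\ on (g i.+1) (f i.+1).
Proof.
case/passageP => _ m1 _; have [q qp hq] := mult1_other m1.
have -> : g i.+1 = other_pants (g i) (f i.+1) by [].
by rewrite /other_pants; case: pickP => [r /andP[]|none] //=; have := none q; rewrite /= qp hq.
Qed.

Lemma walk_on_pants i : walk_passes i -> on (g i) (f i.+1).
Proof. by case/passageP => _ m1 _; rewrite on_multE m1. Qed.

Lemma walk_sides i q : walk_passes i -> on q (f i.+1) -> q = g i \/ q = g i.+1.
Proof.
move=> hi; have [gn on_next] := walk_pants_next hi.
by apply: curve_sides (walk_on_pants hi) on_next; rewrite eq_sym.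
Qed.

Lemma walk_mult_next i : walk_passes i -> mult (g i.+1) (f i.+1) = 1.
Proof.
move=> hi; have [gn on_next] := walk_pants_next hi.
have := mult_pair (f i.+1) gn; move: on_next; case/passageP: hi => _ m1 _.
rewrite on_multE m1; lia.
Qed.

Lemma walk_first_return j i :
  (forall k, k < j -> walk_passes k) -> injective_below g j -> i < j -> g i = g j ->
  i = 0 /\ f j = f 0.
Proof.
case: j => [//|j] hpass hinj ij eij.
have [gj on_next] := walk_pants_next (hpass j (ltnSn j)).
have on_prev := walk_on_pants (hpass j (ltnSn j)).
have : on (g i) (f j.+1) by rewrite eij.
case/passageP: (hpass i ij) => _ _ only; case/only => e.
- case: i ij eij e {only} => [|i] ij eij e; first by [].
  rewrite e in on_prev; case: (walk_sides (hpass i (ltnW ij)) on_prev).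
    by move/(hinj _ _ (ltnSn j) (ltnW ij)) => ji; rewrite ji ltnn in ij.
  by move=> gji; rewrite gji eij eqxx in gj.
- rewrite e in on_prev; case: (walk_sides (hpass i ij) on_prev).
    by move=> gji; rewrite gji eij eqxx in gj.
  move=> gji; have {}ij : i < j.
    by move: ij; rewrite ltnS leq_eqVlt => /predU1P[ij|//]; rewrite -eij ij eqxx in gj.
  have ji := hinj _ _ (ltnSn j) (ij : i.+1 < j.+1) gji.
  by case/passageP: (hpass j (ltnSn j)); rewrite e -ji eqxx.
Qed.

(* The loop [f 0] bounds [g 0] only, so the walk cannot return to its start. *)
Lemma walk_injective_from_loop M :
  mult (g 0) (f 0) = 2 -> (forall k, k < M -> walk_passes k) -> injective_below g M.+1.
Proof.
move=> loop0; elim: M => [|M IH] hpass; first by case=> [|?] [|?].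
have hinj : injective_below g M.+1 by apply: IH => k kM; apply: hpass; apply: ltnW.
apply: (injective_belowS hinj) => i iM; apply/eqP => eij.
have [i0 fM] := walk_first_return hpass hinj iM eij; subst i.
have gM0 : g M = g 0.
  by apply: mult2_unique loop0 _; rewrite -fM; exact: walk_on_pants (hpass M (ltnSn M)).
have M0 := hinj _ _ (ltnSn M) (ltn0Sn M) gM0; subst M.
by case: (walk_pants_next (hpass 0 (ltnSn 0))); rewrite -eij eqxx.
Qed.

Lemma walk_onto j :
  0 < j -> (forall i c q, i < j -> on (g i) c -> on q c -> exists2 i', i' < j & g i' = q) ->
  onto_below g j.
Proof.
pose S := [pred q | [exists i : 'I_j, g i == q]].
have SP q : reflect (exists2 i, i < j & g i = q) (S q).
  apply: (iffP existsP) => [[i /eqP <-]|[i ij <-]]; first by exists i.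
  by exists (Ordinal ij).
move=> j0 closedS q; apply/SP; apply: (@gluing_closed_full S (g 0)); first by apply/SP; exists 0.
by move=> p r c /SP[i ij <-] hc hr; apply/SP; exact: closedS hc hr.
Qed.

Lemma walk_from_loop_stops :
  mult (g 0) (f 0) = 2 -> exists m, ~~ walk_passes m /\ forall k, k < m -> walk_passes k.
Proof.
move=> loop0; have [k stuck] : exists k : 'I_#|Pn|, ~~ walk_passes k.
  apply/existsP; apply: contraT; rewrite negb_exists => /forallP all_pass.
  have hinj := walk_injective_from_loop loop0
    (fun k (hk : k < #|Pn|) => negPn (all_pass (Ordinal hk))).
  by have := injective_below_leq_card hinj; rewrite ltnn.
have ex_stuck : exists m, ~~ walk_passes m by exists k.
case: (ex_minnP ex_stuck) => m stuck_m min_m; exists m; split => // i im.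
by apply/negPn/negP => /min_m; rewrite leqNgt im.
Qed.

Lemma walk_path_onto m :
  mult (g 0) (f 0) = 2 -> (forall k, k < m -> walk_passes k) ->
  (forall e, on (g m) e -> e != f m -> mult (g m) e = 2) -> onto_below g m.+1.
Proof.
move=> loop0 hpass end_closed; apply: walk_onto => // i e q; rewrite ltnS => im he hq.
case: (eqVneq e (f i)) hq => [-> {e he} hq|ne hq].
  case: i im hq => [|i] im hq; first by exists 0; rewrite // (mult2_unique loop0 hq).
  by case: (walk_sides (hpass i im) hq) => ->; [exists i | exists i.+1]; rewrite // ltnS ltnW.
move: im; rewrite leq_eqVlt => /predU1P[ei|im].
  by subst i; exists m; rewrite // (mult2_unique (end_closed e he ne) hq).
case/passageP: (hpass i im) => _ _ only.
case: (only e he) ne hq => -> ne hq; first by rewrite eqxx in ne.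
by case: (walk_sides (hpass i im) hq) => ->; [exists i | exists i.+1]; rewrite // ltnS ltnW.
Qed.

Lemma walk_cycle :
  (forall k, walk_passes k) ->
  exists j, [/\ 0 < j, g j = g 0, f j = f 0, injective_below g j & onto_below g j].
Proof.
move=> hpass; have [j [_ [i ij eij] hinj]] := first_repeat g.
have [i0 fj] := walk_first_return (fun k _ => hpass k) hinj ij eij; subst i.
exists j; split => //; apply: walk_onto => // i e q ii he hq.
case/passageP: (hpass i) => _ _ only; case: (only e he) hq => -> {e he only} hq.
- case: i ii hq => [|i] ii hq.
    case: j ij eij fj hinj ii => [//|j] ij eij fj _ _; rewrite -fj in hq.
    by case: (walk_sides (hpass j) hq) => ->; [exists j | exists 0].
  by case: (walk_sides (hpass i) hq) => ->; [exists i | exists i.+1]; rewrite // ltnW.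
- case: (walk_sides (hpass i) hq) => ->; first by exists i.
  move: ii; rewrite leq_eqVlt => /predU1P[ej|ii]; first by exists 0; rewrite // eij ej.
  by exists i.+1.
Qed.

Lemma walk_passes_annuli :
  (forall p, exists a b k, annulus_pants p a b k) -> on start.1 start.2 -> forall i, walk_passes i.
Proof.
move=> annuli on0.
have pass_on i : on (g i) (f i) -> walk_passes i.
  move=> on_i; have [a [b [k hab]]] := annuli (g i).
  by have [d hd] := annulus_passage_on hab on_i; exact: walk_passesI hd.
suff : forall i, on (g i) (f i) by move=> on_walk i; exact: pass_on.
by elim=> [//|i on_i]; case: (walk_pants_next (pass_on i on_i)).
Qed.

End Walk.

(** * Triangle-free decompositions *)

Section Classification.
Hypotheses (n_gt1 : 1 < n) (tfree : triangle_free P).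

Lemma pants_not_closed p : ~ (forall c, on p c -> mult p c = 2).
Proof.
move=> closed_p; have [q qp] : exists q, q != p.
  have : 0 < #|predC1 p| by rewrite cardC1 (euler_char P); lia.
  by case/card_gt0P => q; exists q.
suff : q == p by rewrite (negbTE qp).
apply: (@gluing_closed_full (pred1 p) p (eqxx p)) => _ r c /eqP -> hc hr.
by apply/eqP; apply: mult2_unique hr; apply: closed_p.
Qed.

Lemma pants_shapes p :
  [\/ exists c d, torus_pants p c d, exists c d k, annulus_pants p c d k
    | exists c k k', disk_pants p c k k'].
Proof.
have [cs [ks hp]] := perm_inl_inr (slots P p).
have := perm_size hp; rewrite size_tuple size_cat !size_map.
case: cs hp => [|a [|b [|c [|? ?]]]]; case: ks => [|k [|k' [|k'' [|? ?]]]] //= hp _.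
- by case: (pants_not_closed (p := p)) => e; rewrite (on_perm _ hp) !inE !eq_inl_inr.
- by constructor 3; exists a, k, k'.
- case: (eqVneq a b) hp => [<-|ab] hp; last first.
    by constructor 2; exists a, b, k; rewrite /annulus_pants ab.
  case: (pants_not_closed (p := p)) => e.
  rewrite (on_perm _ hp) (mult_perm _ hp) !inE !eq_inl eq_inl_inr orbF orbb => /eqP ->.
  by rewrite /= eqxx.
have perm_abc (x y z : C + 'I_n) : perm_eq [:: x; y; z] [:: y; z; x].
  by apply/permP => q /=; lia.
case: (eqVneq a b) hp => [<-|ab] hp.
  case: (eqVneq a c) hp => [<-|ac] hp; last by constructor 1; exists a, c; rewrite /torus_pants ac.
  by have := mult_le2 p a; rewrite (mult_perm _ hp) /= eq_inl eqxx.
case: (eqVneq a c) hp => [<-|ac] hp.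
  constructor 1; exists a, b; rewrite /torus_pants ab.
  by rewrite (perm_trans hp) // perm_sym perm_abc.
case: (eqVneq b c) hp => [<-|bc] hp.
  by constructor 1; exists b, a; rewrite /torus_pants eq_sym ab (perm_trans hp) // perm_abc.
have adj x y : x != y -> on p x -> on p y -> adjacent P x y.
  by move=> xy hx hy; rewrite /adjacent xy; apply/existsP; exists p; rewrite hx hy.
have on_p x : x \in [:: a; b; c] -> on p x.
  by rewrite (on_perm _ hp) !inE !eq_inl.
have [ha hb hc] : [/\ on p a, on p b & on p c] by rewrite !on_p // !inE eqxx ?orbT.
by case: (tfree (And3 (adj _ _ ab ha hb) (adj _ _ bc hb hc) (adj c a _ hc ha))); rewrite eq_sym.
Qed.

Lemma passage_slots p c d :
  passage p c d -> mult p c = 1 -> exists k, perm_eq (slots P p) [:: inl c; inl d; inr k].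
Proof.
move=> hpass mc; have on_c : on p c by rewrite on_multE mc.
case/passageP: hpass => dc md only; have on_d : on p d by rewrite on_multE md.
case: (pants_shapes p) => [[a [b hab]] | [a [b [k hab]]] | [a [k [k' hak]]]].
- have [_ _ only_ab] := passageP _ _ _ (torus_passage hab).
  have loop := torus_loop hab.
  case: (only_ab c on_c) => ec; first by rewrite ec loop in mc.
  case: (only_ab d on_d) => ed; first by rewrite ed loop in md.
  by rewrite ec ed eqxx in dc.
- move: (hab); case/andP => ab hp.
  case: (annulus_curves hab on_c) => ec; case: (annulus_curves hab on_d) => ed; subst c d.
  + by rewrite eqxx in dc.
  + by exists k.
  + by exists k; apply: perm_trans hp _; apply/permP => q /=; lia.
  + by rewrite eqxx in dc.
- by rewrite (disk_curve hak on_c) (disk_curve hak on_d) eqxx in dc.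
Qed.

Lemma stuck_pants p c :
  mult p c = 1 -> (forall d, ~~ passage p c d) ->
  (exists a, torus_pants p a c) \/ (exists k k', disk_pants p c k k').
Proof.
move=> mc stuck; have on_c : on p c by rewrite on_multE mc.
case: (pants_shapes p) => [[a [b hab]] | [a [b [k hab]]] | [a [k [k' hak]]]].
- have [_ _ only_ab] := passageP _ _ _ (torus_passage hab).
  case: (only_ab c on_c) => ec; first by rewrite ec (torus_loop hab) in mc.
  by left; exists a; rewrite ec.
- by have [d] := annulus_passage_on hab on_c; rewrite (negbTE (stuck d)).
- by right; exists k, k'; rewrite (disk_curve hak on_c).
Qed.

Lemma torus_walk_ends_in_disk p c d :
  torus_pants p c d ->
  exists m, [/\ forall k, k < m -> walk_passes (p, c) k,
    injective_below (walk_pants (p, c)) m.+1, onto_below (walk_pants (p, c)) m.+1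
    & exists k k', disk_pants (walk_pants (p, c) m) (walk_curve (p, c) m) k k'].
Proof.
move=> tor; set g := walk_pants (p, c); set f := walk_curve (p, c).
have loop0 : mult (g 0) (f 0) = 2 := torus_loop tor.
have [[|m] [stuck hpass]] := walk_from_loop_stops loop0.
  by rewrite (walk_passesI (start := (p, c)) (i := 0) (torus_passage tor)) in stuck.
have ends := stuck_pants (walk_mult_next (hpass m (ltnSn m)))
  (fun d' => contra (@walk_passesI _ _ d') stuck).
have end_closed e : on (g m.+1) e -> e != f m.+1 -> mult (g m.+1) e = 2.
  move=> he ne; case: ends => [[a ta]|[k [k' dk]]]; last by rewrite (disk_curve dk he) eqxx in ne.
  have [_ _ only] := passageP _ _ _ (torus_passage ta).
  by case: (only e he) ne => ->; [rewrite (torus_loop ta) | rewrite eqxx].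
have onto_g := walk_path_onto loop0 hpass end_closed.
exists m.+1; split => //; first exact: walk_injective_from_loop loop0 hpass.
(* At a torus end every pants would carry two curve slots or more, hence
   exactly two by [sum_deg]; but the torus [g 0] carries three. *)
case: ends => // -[a ta]; exfalso.
have deg2 q : 2 <= deg q.
  have [i im <-] := onto_g q; move: im; rewrite ltnS leq_eqVlt => /predU1P[->|im].
    by case/andP: ta => _ hp; rewrite /deg (permP hp).
  have [fn _ _] := passageP _ _ _ (hpass i im).
  apply: deg_ge2 fn (walk_on_pants (hpass i im)) _.
  by case: i im => [|i] im; [rewrite on_multE loop0 | case: (walk_pants_next (hpass i (ltnW im)))].
have := sum_eq_const sum_deg (or_introl deg2) (g 0).
by case/andP: tor => _ hp; rewrite /deg (permP hp).
Qed.

Lemma linear_of_torus p c d : torus_pants p c d -> linear P.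
Proof.
move=> tor; have [m [hpass inj_g onto_g [k [k' dk]]]] := torus_walk_ends_in_disk tor.
set g := walk_pants (p, c) in hpass inj_g onto_g dk *; set f := walk_curve (p, c) in hpass dk *.
have card_m : m.+1 = n.
  rewrite -(euler_char P); apply/eqP.
  by rewrite eqn_leq (injective_below_leq_card inj_g) (onto_below_card_leq onto_g).
have onto_f : onto_below f n.
  move=> e; have [q on_e] := curve_on_some e; have [i im gi] := onto_g q; subst q.
  move: im; rewrite -card_m ltnS leq_eqVlt => /predU1P[ei|im].
    by subst i; exists m; rewrite // (disk_curve dk on_e).
  case/passageP: (hpass i im) => _ _ only.
  by case: (only e on_e) => ->; [exists i | exists i.+1] => //; lia.
have inj_f := onto_below_injective onto_f card_curves.
exists f, g; split; split => //; rewrite -?card_m //.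
- by rewrite /f (walk_curve_next (start := (p, c)) (i := 0) (torus_passage tor)); case/andP: tor.
- move=> i i1 i2; have {i2} im : i < m by lia.
  case: i i1 im => // i _ im.
  exact: passage_slots (hpass i.+1 im) (walk_mult_next (hpass i (ltnW im))).
- have -> : n - 1 = m by lia.
  by exists k, k'.
Qed.

Lemma annuli_of_no_torus :
  (forall p c d, ~~ torus_pants p c d) -> forall p, exists a b k, annulus_pants p a b k.
Proof.
move=> no_torus.
have deg_le2 q : deg q <= 2.
  case: (pants_shapes q) => [[c [d tor]] | [c [d [k /andP[_ hp]]]] | [c [k [k' hp]]]].
  - by rewrite (negbTE (no_torus _ _ _)) in tor.
  - by rewrite /deg (permP hp).
  - by rewrite /deg (permP hp).
move=> p; case: (pants_shapes p) => [[c [d tor]] | // | [c [k [k' hp]]]].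
  by rewrite (negbTE (no_torus _ _ _)) in tor.
by have := sum_eq_const sum_deg (or_intror deg_le2) p; rewrite /deg (permP hp).
Qed.

Lemma cyclic_of_annuli : (forall p, exists a b k, annulus_pants p a b k) -> cyclic P.
Proof.
move=> annuli; have [p0 _] : exists p0 : Pn, true.
  by have /card_gt0P[p0 _] : 0 < #|Pn| by rewrite (euler_char P); lia.
have [a [b [k hab]]] := annuli p0.
have on0 : on p0 a by case/andP: hab => _ hp; rewrite (on_perm _ hp) inE eqxx.
have hpass := walk_passes_annuli (start := (p0, a)) annuli on0.
have [j [j0 gj fj inj_g onto_g]] := walk_cycle hpass.
set g := walk_pants (p0, a) in hpass gj inj_g onto_g *.
set f := walk_curve (p0, a) in hpass fj *.
have card_j : j = n.
  rewrite -(euler_char P); apply/eqP.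
  by rewrite eq_sym eqn_leq (injective_below_leq_card inj_g) (onto_below_card_leq onto_g).
subst j.
have onto_f : onto_below f n.
  move=> e; have [q on_e] := curve_on_some e; have [i i_n gi] := onto_g q; subst q.
  case/passageP: (hpass i) => _ _ only; case: (only e on_e) => ->; first by exists i.
  move: i_n; rewrite leq_eqVlt => /predU1P[ein|i_n]; last by exists i.+1.
  by exists 0; rewrite // ein -fj.
have inj_f := onto_below_injective onto_f card_curves.
have mult_walk i : mult (g i) (f i) = 1.
  case: i => [|i]; last exact: walk_mult_next (hpass i).
  by case: (n) j0 gj fj => [//|m] _ <- <-; exact: walk_mult_next (hpass m).
exists f, g; split => // i i_n.
have -> : f (i.+1 %% n) = f i.+1.
  move: i_n; rewrite leq_eqVlt => /predU1P[ein|i_n]; last by rewrite modn_small.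
  by rewrite ein modnn -fj.
exact: passage_slots (hpass i) (mult_walk i).
Qed.

End Classification.

End PantsDecomposition.

Theorem lemma10 (n : nat) (C Pn : finType) (P : pants_decomposition n C Pn) :
  4 <= n -> triangle_free P -> linear P \/ cyclic P.
Proof.
move=> n_ge4 tfree; have n_gt1 : 1 < n by lia.
case: (boolP [exists p, exists c, exists d, torus_pants P p c d]) => [|no_torus].
  by case/existsP => p /existsP[c /existsP[d tor]]; left; exact: (linear_of_torus n_gt1 tfree tor).
right; apply: (cyclic_of_annuli n_gt1 tfree); apply: (annuli_of_no_torus n_gt1 tfree) => p c d.
apply: contra no_torus => tor.
by apply/existsP; exists p; apply/existsP; exists c; apply/existsP; exists d.
Qed.
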